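(* Let $\mu\in\mathbb{Z}_{\ge0}^m$ and let $\nu\in\{0,\dots,m\}^n$ be non-increasing ($\nu_1\ge\dots\ge\nu_n$), and let $t=\alpha^\mu\beta^\nu$. Let $F_\nu\in\{0,1\}^{m\times n}$ be the bottom-left flushed matrix with $cs(F_\nu)=\nu$. For $\mathcal{R}\in\{0,1\}^{m\times n}$ the following are equivalent: (1) $\mathcal{R}$ is a res-representation of $t$; (2) $(\mathcal{R},F_\nu)$ is a sorted-flushed syl-representation of $t$.
   Context: For $M\in\{0,1\}^{m\times n}$: $\bar M_{ij}=1-M_{ij}$; $rs(M)=(\sum_j M_{ij})_i$; $cs(M)=(\sum_i M_{ij})_j$; $ars(M)=(i+\sum_j M_{ij})_{i=1..m}$; $acs(M)=(j+\sum_i M_{ij})_{j=1..n}$. $M$ is bottom-left flushed if whenever $M_{ij}=1$, also $M_{i'j'}=1$ for all $i'\ge i$, $j'\le j$ (so $F_\nu$ has $(F_\nu)_{ij}=1$ iff $i>m-\nu_j$). A res-representation of $\alpha^\mu\beta^\nu$ is $\mathcal{R}\in\{0,1\}^{m\times n}$ with $rs(\mathcal{R})=\mu$, $cs(\bar{\mathcal{R}})=\nu$. $PC(A,B)$ means $\{acs(A)_1,\dots,acs(A)_n,ars(B)_1,\dots,ars(B)_m\}=\{1,\dots,m+n\}$. A syl-representation of $\alpha^\mu\beta^\nu$ is a pair $(\mathcal{S}_1,\mathcal{S}_2)$ in $\{0,1\}^{m\times n}$ with $rs(\mathcal{S}_1)=\mu$, $cs(\mathcal{S}_2)=\nu$,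 $PC(\mathcal{S}_1,\mathcal{S}_2)$. A pair $(A,B)$ is sorted if $acs(A)$ and $ars(B)$ are strictly increasing, flushed if $B$ is bottom-left flushed, sorted-flushed if both. *)

(* 0/1 matrices are 'M[bool]_(m,n); row/column indices are
   0-based ordinals, shifted by +1 where the paper's formulas use the index
   value (ars, acs, F_nu). *)
From mathcomp Require Import all_boot all_order all_algebra.
Set Implicit Arguments. Unset Strict Implicit. Unset Printing Implicit Defensive.

Section Defs.
Variables m n : nat.
Implicit Type M : 'M[bool]_(m, n).

Definition cmpl M : 'M[bool]_(m, n) := \matrix_(i, j) ~~ M i j.
Definition rs M (i : 'I_m) : nat := \sum_(j < n) (M i j : nat).
Definition cs M (j : 'I_n) : nat := \sum_(i < m) (M i j : nat).
Definition ars M (i : 'I_m) : nat := i.+1 + rs M i.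
Definition acs M (j : 'I_n) : nat := j.+1 + cs M j.

Definition bl_flushed M : Prop :=
  forall (i i' : 'I_m) (j j' : 'I_n),
    M i j -> (i <= i')%N -> (j' <= j)%N -> M i' j'.

Definition Fmat (nu : 'I_n -> nat) : 'M[bool]_(m, n) :=
  \matrix_(i, j) (m - nu j < i.+1)%N.

Definition res_rep (mu : 'I_m -> nat) (nu : 'I_n -> nat) M : Prop :=
  (forall i, rs M i = mu i) /\ (forall j, cs (cmpl M) j = nu j).

Definition PC (A B : 'M[bool]_(m, n)) : Prop :=
  [seq acs A j | j <- enum 'I_n] ++ [seq ars B i | i <- enum 'I_m]
    =i iota 1 (m + n).

Definition syl_rep (mu : 'I_m -> nat) (nu : 'I_n -> nat)
    (S1 S2 : 'M[bool]_(m, n)) : Prop :=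
  (forall i, rs S1 i = mu i) /\ (forall j, cs S2 j = nu j) /\ PC S1 S2.

Definition pair_sorted (A B : 'M[bool]_(m, n)) : Prop :=
  (forall j j' : 'I_n, (j < j')%N -> (acs A j < acs A j')%N) /\
  (forall i i' : 'I_m, (i < i')%N -> (ars B i < ars B i')%N).

Definition pair_flushed (A B : 'M[bool]_(m, n)) : Prop := bl_flushed B.

Definition sorted_flushed (A B : 'M[bool]_(m, n)) : Prop :=
  pair_sorted A B /\ pair_flushed A B.
End Defs.

From mathcomp Require Import all_boot all_order all_algebra.
From mathcomp Require Import zify.

Set Implicit Arguments.
Unset Strict Implicit.
Unset Printing Implicit Defensive.

(* A res-representation has cs R j = m - nu_j, so its augmented column sums
   are forced to be j + m - nu_j.  The heart of the matter is that these n
   numbers and the m numbers ars(F_nu)_i partition {1, ..., m+n}: the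
   columns with nu_k >= m + 1 - i form a prefix of the columns because nu
   is non-increasing, so ars(F_nu)_i = i + #prefix misses every value
   j + m - nu_j (it overshoots those inside the prefix and undershoots the
   others).  Conversely, PC with F_nu fixes
   the set of values of acs R as the complement of ars(F_nu), and
   sortedness fixes the sequence itself. *)

Lemma sum_ord_lt n c : \sum_(k < n) ((k < c)%N : nat) = minn c n.
Proof.
elim: n => [|n IHn]; first by rewrite big_ord0 minn0.
by rewrite big_ord_recr /= IHn; case: (ltnP n c) => /= h; lia.
Qed.

Lemma sum_ord_ge n c : \sum_(k < n) ((c <= k)%N : nat) = n - c.
Proof.
elim: n => [|n IHn]; first by rewrite big_ord0.
by rewrite big_ord_recr /= IHn; case: (leqP c n) => /= h; lia.
Qed.

Lemma cs_add_cs_cmpl m n (M : 'M[bool]_(m, n)) j : cs M j + cs (cmpl M) j = m.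
Proof.
rewrite /cs -big_split /= (eq_bigr (fun _ => 1)) ?sum1_card ?card_ord // => i _.
by rewrite mxE; case: (M i j).
Qed.

Lemma sorted_map_enum_ord n (f : 'I_n -> nat) :
  (forall j j' : 'I_n, (j < j')%N -> (f j < f j')%N) ->
  sorted ltn [seq f j | j <- enum 'I_n].
Proof.
move=> f_incr; rewrite sorted_map.
have : sorted ltn [seq val j | j <- enum 'I_n].
  by rewrite val_enum_ord iota_ltn_sorted.
by rewrite sorted_map; apply: sub_sorted => j j'; apply: f_incr.
Qed.

Lemma size_map_enum_cat T n m (f : 'I_n -> T) (g : 'I_m -> T) :
  size ([seq f j | j <- enum 'I_n] ++ [seq g i | i <- enum 'I_m]) = m + n.
Proof. by rewrite size_cat !size_map -!enumT !size_enum_ord addnC. Qed.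

Lemma uniq_of_mem_iota (s : seq nat) k :
  size s = k -> s =i iota 1 k -> uniq s.
Proof.
move=> size_s s_eq; apply: (leq_size_uniq (iota_uniq 1 k)).
  by move=> x; rewrite s_eq.
by rewrite size_iota size_s.
Qed.

Lemma mem_iota_of_uniq (s : seq nat) k :
  size s = k -> {subset s <= iota 1 k} -> uniq s -> s =i iota 1 k.
Proof.
move=> size_s s_sub s_uniq.
by have [] := uniq_min_size s_uniq s_sub; rewrite ?size_iota ?size_s.
Qed.

Lemma sorted_complement_eq (T : eqType) (r : rel T) (s1 s2 t u : seq T) :
  transitive r -> irreflexive r -> sorted r s1 -> sorted r s2 ->
  uniq (s1 ++ t) -> uniq (s2 ++ t) -> s1 ++ t =i u -> s2 ++ t =i u ->
  s1 = s2.
Proof.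
move=> r_trans r_irr s1_sorted s2_sorted.
rewrite !cat_uniq => /and3P [_ dis1 _] /and3P [_ dis2 _] eq1 eq2.
have sub (a b : seq T) : ~~ has (mem b) t -> a ++ t =i u -> b ++ t =i u ->
    {subset b <= a}.
  move=> dis_b eq_a eq_b x xb.
  have : x \in a ++ t by rewrite eq_a -eq_b mem_cat xb.
  rewrite mem_cat => /orP [] // xt.
  by case/negP: (hasPn dis_b x xt).
apply: (irr_sorted_eq r_trans r_irr s1_sorted s2_sorted) => x.
by apply/idP/idP; [apply: (sub _ _ dis1 eq2 eq1) | apply: (sub _ _ dis2 eq1 eq2)].
Qed.

Section FlushedMatrix.
Variables (m n : nat) (nu : 'I_n -> nat).

Lemma cs_Fmat j : (nu j <= m)%N -> cs (Fmat m nu) j = nu j.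
Proof.
move=> nu_le; rewrite /cs (eq_bigr (fun i : 'I_m => ((m - nu j <= i)%N : nat))).
  by rewrite sum_ord_ge; lia.
by move=> i _; rewrite mxE.
Qed.

Lemma rs_Fmat i : rs (Fmat m nu) i = \sum_(k < n) ((m - nu k <= i)%N : nat).
Proof. by apply: eq_bigr => k _; rewrite mxE. Qed.

Lemma ars_Fmat_increasing (i i' : 'I_m) :
  (i < i')%N -> (ars (Fmat m nu) i < ars (Fmat m nu) i')%N.
Proof.
move=> lt_ii'; rewrite /ars !rs_Fmat.
suff : (\sum_(k < n) ((m - nu k <= i)%N : nat) <=
        \sum_(k < n) ((m - nu k <= i')%N : nat))%N by lia.
by apply: leq_sum => k _; case: (leqP (m - nu k) i) => h //=; lia.
Qed.

Definition res_acs (j : 'I_n) : nat := j.+1 + (m - nu j).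

Lemma acs_res_acs (M : 'M[bool]_(m, n)) j :
  (nu j <= m)%N -> (acs M j = res_acs j <-> cs (cmpl M) j = nu j).
Proof.
move=> nu_le; rewrite /acs /res_acs.
by have := cs_add_cs_cmpl M j; split; lia.
Qed.

Hypothesis nu_noninc : forall j j' : 'I_n, (j <= j')%N -> (nu j' <= nu j)%N.

Lemma Fmat_bl_flushed : bl_flushed (Fmat m nu).
Proof.
move=> i i' j j'; rewrite !mxE => Fij le_ii' le_j'j.
by have := nu_noninc le_j'j; lia.
Qed.

Lemma res_acs_increasing (j j' : 'I_n) : (j < j')%N -> (res_acs j < res_acs j')%N.
Proof. by move=> lt_jj'; have := nu_noninc (ltnW lt_jj'); rewrite /res_acs; lia. Qed.

Lemma ars_Fmat_neq_res_acs i j : ars (Fmat m nu) i != res_acs j.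
Proof.
rewrite /ars /res_acs rs_Fmat; case: (leqP (m - nu j) i) => h.
- suff : (j.+1 <= \sum_(k < n) ((m - nu k <= i)%N : nat))%N by lia.
  have <- : minn j.+1 n = j.+1 by have := ltn_ord j; lia.
  rewrite -sum_ord_lt; apply: leq_sum => k _.
  case: (ltnP k j.+1) => //= le_kj.
  suff -> : (m - nu k <= i)%N by [].
  by have := nu_noninc le_kj; lia.
- suff : (\sum_(k < n) ((m - nu k <= i)%N : nat) <= j)%N by lia.
  apply: leq_trans (geq_minl j n); rewrite -sum_ord_lt.
  apply: leq_sum => k _; case: (ltnP k j) => [_|le_jk]; first exact: leq_b1.
  suff -> : (m - nu k <= i)%N = false by [].
  by apply/negbTE; rewrite -ltnNge; have := nu_noninc le_jk; lia.
Qed.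

Lemma res_acs_ars_Fmat_uniq :
  uniq ([seq res_acs j | j <- enum 'I_n] ++ [seq ars (Fmat m nu) i | i <- enum 'I_m]).
Proof.
rewrite cat_uniq.
rewrite (sorted_uniq ltn_trans ltnn (sorted_map_enum_ord res_acs_increasing)).
rewrite (sorted_uniq ltn_trans ltnn (sorted_map_enum_ord ars_Fmat_increasing)).
rewrite andbT; apply/hasPn => _ /mapP [i _ ->]; apply/mapP => -[j _].
exact/eqP/ars_Fmat_neq_res_acs.
Qed.

Lemma PC_res_acs_Fmat :
  [seq res_acs j | j <- enum 'I_n] ++ [seq ars (Fmat m nu) i | i <- enum 'I_m]
    =i iota 1 (m + n).
Proof.
apply: mem_iota_of_uniq res_acs_ars_Fmat_uniq; first exact: size_map_enum_cat.
move=> x; rewrite mem_cat mem_iota => /orP [] /mapP [k _ ->].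
  by rewrite /res_acs; have := ltn_ord k; lia.
have : (rs (Fmat m nu) k <= \sum_(j < n) 1)%N.
  by apply: leq_sum => j _; case: (Fmat m nu k j).
by rewrite /ars sum1_card card_ord; have := ltn_ord k; lia.
Qed.

End FlushedMatrix.

Theorem mainTheorem6 (m n : nat) (mu : 'I_m -> nat) (nu : 'I_n -> nat)
  (hnu_le : forall j, (nu j <= m)%N)
  (hnu_noninc : forall j j' : 'I_n, (j <= j')%N -> (nu j' <= nu j)%N)
  (R : 'M[bool]_(m, n)) :
  res_rep mu nu R <->
  (syl_rep mu nu R (Fmat m nu) /\ sorted_flushed R (Fmat m nu)).
Proof.
split.
- move=> [rs_R cs_cmplR].
  have acs_R j : acs R j = res_acs m nu j by apply/acs_res_acs.
  split; [split; [exact: rs_R | split] | split; [split | exact: Fmat_bl_flushed]].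
  + by move=> j; apply: cs_Fmat.
  + by rewrite /PC (eq_map acs_R); apply: PC_res_acs_Fmat.
  + by move=> j j' lt_jj'; rewrite !acs_R; apply: res_acs_increasing.
  + exact: ars_Fmat_increasing.
- move=> [[rs_R [_ pc]] [[acs_R_incr _] _]]; split=> // j.
  have uniq_R := uniq_of_mem_iota (size_map_enum_cat _ _) pc.
  have := sorted_complement_eq ltn_trans ltnn (sorted_map_enum_ord acs_R_incr)
    (sorted_map_enum_ord (res_acs_increasing m hnu_noninc)) uniq_R
    (res_acs_ars_Fmat_uniq m hnu_noninc) pc (PC_res_acs_Fmat m hnu_noninc).
  by move/eq_in_map/(_ j (mem_enum _ j))/(acs_res_acs R (hnu_le j)).
Qed.
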